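(* Let $\mathbb{X}$ be a two-dimensional real Banach space, let $x\in S_{\mathbb{X}}$, $\epsilon\in[0,1)$, and let $y\in S_{\mathbb{X}}$ be such that $x\perp_B y$. Let $t_1=\inf\{t\in[0,1] : x\perp_D^{\epsilon}((1-t)x+ty)\}$ and $t_2=\inf\{t\in[0,1] : x\perp_D^{\epsilon}(-(1-t)x+ty)\}$, put $u_1=(1-t_1)x+t_1y$, $u_2=-(1-t_2)x+t_2y$, $v_1=u_1/\|u_1\|$, $v_2=u_2/\|u_2\|$. Let $S(x,\epsilon)=\{z\in S_{\mathbb{X}} : \inf_{\lambda\in\mathbb{R}}\|x+\lambda z\|=\sqrt{1-\epsilon^2}\}$. Then $S(x,\epsilon)=\{\pm v_1,\pm v_2\}$ if $\epsilon\in(0,1)$, and $S(x,\epsilon)=\{y'\in S_{\mathbb{X}} : x\perp_B y'\}$ if $\epsilon=0$.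
   Context: $S_{\mathbb{X}}$ is the unit sphere of $\mathbb{X}$. For $x,y\in\mathbb{X}$, $x\perp_B y$ (Birkhoff-James orthogonality) means $\|x+\lambda y\|\geq\|x\|$ for all $\lambda\in\mathbb{R}$. For $\epsilon\in[0,1)$, $x\perp_D^{\epsilon} y$ means $\|x+\lambda y\|\geq\sqrt{1-\epsilon^2}\,\|x\|$ for all $\lambda\in\mathbb{R}$. *)

From HB Require Import structures.
From mathcomp Require Import all_boot all_order all_algebra.
From mathcomp Require Import all_classical all_reals all_analysis.
Set Implicit Arguments. Unset Strict Implicit. Unset Printing Implicit Defensive.
Import Order.TTheory GRing.Theory Num.Theory.
Import numFieldNormedType.Exports.
Local Open Scope classical_set_scope.
Local Open Scope ring_scope.

Section Defs.
Variables (R : realType) (V : normedModType R).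

Definition dim_two : Prop :=
  exists e1 e2 : V, forall v : V, exists! p : R * R, v = p.1 *: e1 + p.2 *: e2.

Definition unit_sphere : set V := [set z : V | `|z| = 1].

Definition BJ_orth (x y : V) : Prop := forall l : R, `|x| <= `|x + l *: y|.

Definition D_orth (eps : R) (x y : V) : Prop :=
  forall l : R, Num.sqrt (1 - eps ^+ 2) * `|x| <= `|x + l *: y|.

Definition S_set (x : V) (eps : R) : set V :=
  [set z | `|z| = 1 /\ inf (range (fun l : R => `|x + l *: z|)) = Num.sqrt (1 - eps ^+ 2)].
End Defs.

From HB Require Import structures.
From mathcomp Require Import all_boot all_order all_algebra.
From mathcomp Require Import all_classical all_reals all_analysis.
From mathcomp Require Import ring lra.
Import Order.TTheory GRing.Theory Num.Theory.
Import numFieldNormedType.Exports.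
Local Open Scope classical_set_scope.
Local Open Scope ring_scope.

Set Implicit Arguments. Unset Strict Implicit. Unset Printing Implicit Defensive.

(* For a unit vector [x], [x _|_D^eps z] says that the distance from [x] to the
   line [R z] is at least [d = sqrt (1 - eps^2)], and [x _|_B z] that it is 1, so
   [S(x, eps)] is the set of unit vectors whose line is at distance exactly [d]
   from [x].  Along [w_t = (1 - t) x + t y] this distance [g t] is continuous,
   with [g 0 = 0] and [g 1 = 1], because Birkhoff-James orthogonality bounds the
   coefficients of [a x + b y] by its norm; and it is strictly increasing where
   [0 < g < 1], because rescaling moves near-minimisers for [w_t] onto the line
   [x + R w_s], [s < t], while shrinking them.  So for [0 < d < 1] the level
   [g = d] is the single parameter [t1], and likewise [t2] for [-x].  Since
   [(x, y)] is a basis, each unit vector is, up to sign, a positive multiple of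
   some [w_t] built from [x] or from [-x]. *)

Section LineDist.
Variables (R : realType) (V : normedModType R).
Implicit Types (x w : V) (l : R).

Definition line_dist x w := inf (range (fun l : R => `|x + l *: w|)).

Lemma line_dist_le x w l : line_dist x w <= `|x + l *: w|.
Proof. by apply: ge_inf; [exists 0 => _ [? _ <-] | exists l]. Qed.

Lemma line_dist_glb x w c : (forall l, c <= `|x + l *: w|) -> c <= line_dist x w.
Proof.
by move=> le_c; apply: lb_le_inf; [exists `|x + 0 *: w|, 0 | move=> _ [l _ <-]].
Qed.

Lemma line_dist_ge0 x w : 0 <= line_dist x w.
Proof. exact: line_dist_glb. Qed.

Lemma line_dist_le_norm x w : line_dist x w <= `|x|.
Proof. by have := line_dist_le x w 0; rewrite scale0r addr0. Qed.

Lemma line_dist_self x : line_dist x x = 0.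
Proof.
apply/eqP; rewrite eq_le line_dist_ge0 andbT.
by have := line_dist_le x x (-1); rewrite scaleN1r subrr normr0.
Qed.

Lemma line_distZ x w c : c != 0 -> line_dist x (c *: w) = line_dist x w.
Proof.
move=> c0; apply/eqP; rewrite eq_le; apply/andP; split; apply: line_dist_glb => l.
  by rewrite -[l](mulfVK c0) -scalerA; apply: line_dist_le.
by rewrite scalerA; apply: line_dist_le.
Qed.

Lemma line_distNr x w : line_dist x (- w) = line_dist x w.
Proof. by rewrite -scaleN1r line_distZ // oppr_eq0 oner_eq0. Qed.

Lemma line_distNl x w : line_dist (- x) w = line_dist x w.
Proof.
have le_opp x' : line_dist (- x') w <= line_dist x' w.
  apply: line_dist_glb => l; apply: le_trans (line_dist_le _ _ (- l)) _.
  by rewrite -normrN opprD opprK scaleNr opprK.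
by apply/eqP; rewrite eq_le le_opp -{1}[x]opprK le_opp.
Qed.

(* Near-minimisers have [|l| |w| <= 2 |x|]; on that range moving [w] to [w']
   changes [|x + l w|] by at most [2 |x| / |w| * |w - w'|]. *)
Lemma line_dist_lipschitz x w w' : 0 < `|w| ->
  line_dist x w' <= line_dist x w + 2 * `|x| / `|w| * `|w - w'|.
Proof.
move=> w_gt0; rewrite -lerBlDr; apply: line_dist_glb => l.
have [l_small|l_big] := leP (`|l| * `|w|) (2 * `|x|).
  rewrite lerBlDr; apply: le_trans (line_dist_le x w' l) _.
  have -> : x + l *: w' = (x + l *: w) - l *: (w - w').
    by rewrite scalerBr opprB [l *: w' - _]addrC addrA addrK.
  apply: le_trans (ler_normB _ _) _; rewrite lerD2l normrZ ler_wpM2r //.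
  by rewrite ler_pdivlMr.
have := line_dist_le_norm x w'; have := normr_ge0 (w - w').
have : `|l *: w| <= `|x + l *: w| + `|x|.
  by rewrite -{1}[l *: w](addKr x) (le_trans (ler_normD _ _)) // normrN addrC.
rewrite normrZ.
have : 0 <= 2 * `|x| / `|w| by rewrite divr_ge0 ?mulr_ge0.
nra.
Qed.

Lemma BJ_orthE x w : BJ_orth x w <-> line_dist x w = `|x|.
Proof.
split=> [xw|dx l]; last by rewrite -dx line_dist_le.
by apply/eqP; rewrite eq_le line_dist_le_norm line_dist_glb.
Qed.

Lemma D_orthE eps x w :
  D_orth eps x w <-> Num.sqrt (1 - eps ^+ 2) * `|x| <= line_dist x w.
Proof.
split=> [xw|le_d l]; first exact: line_dist_glb.
exact: le_trans le_d (line_dist_le _ _ _).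
Qed.

Lemma D_orthNl eps x w : D_orth eps (- x) w <-> D_orth eps x w.
Proof. by rewrite !D_orthE line_distNl normrN. Qed.

Lemma unit_posZE (u : V) (k : R) : 0 < k -> `|k *: u| = 1 -> k *: u = `|u|^-1 *: u.
Proof.
move=> k0; rewrite normrZ gtr0_norm // => ku1.
have u0 : `|u| != 0 by apply: contra_eq_neq ku1 => ->; rewrite mulr0 eq_sym oner_neq0.
by congr (_ *: u); apply: (mulIf u0); rewrite mulVf.
Qed.

Lemma norm_normalize (u : V) : u != 0 -> `| `|u|^-1 *: u| = 1.
Proof. by move=> u0; rewrite normrZ normfV normr_id mulVf ?normr_eq0. Qed.

End LineDist.

Section Segment.
Variables (R : realType) (V : normedModType R) (x y : V).
Hypotheses (hx : `|x| = 1) (hy : `|y| = 1) (hxy : BJ_orth x y).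
Implicit Types (a b l s t : R).

Lemma coefx_le_norm a b : `|a| <= `|a *: x + b *: y|.
Proof.
have [->|a0] := eqVneq a 0; first by rewrite normr0.
have -> : a *: x + b *: y = a *: (x + (b / a) *: y).
  by rewrite scalerDr scalerA mulrCA divff ?mulr1.
by rewrite normrZ -{1}[`|a|]mulr1 ler_wpM2l // -hx; apply: hxy.
Qed.

Lemma coef_le_norm a b : `|a| + `|b| <= 3 * `|a *: x + b *: y|.
Proof.
have := coefx_le_norm a b.
have : `|b *: y| <= `|a *: x + b *: y| + `|a *: x|.
  by rewrite -{1}[b *: y](addKr (a *: x)) (le_trans (ler_normD _ _)) // normrN addrC.
rewrite !normrZ hx hy !mulr1; lra.
Qed.

Definition seg_pt t := (1 - t) *: x + t *: y.

Definition seg_dist t := line_dist x (seg_pt t).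

Lemma seg_pt_norm_ge t : 1 <= 3 * `|seg_pt t|.
Proof.
apply: le_trans (coef_le_norm _ _).
by have := ler_normD (1 - t) t; rewrite subrK normr1.
Qed.

Lemma seg_pt_neq0 t : seg_pt t != 0.
Proof. by rewrite -normr_gt0; have := seg_pt_norm_ge t; lra. Qed.

Lemma seg_pt_norm_le t : 0 <= t <= 1 -> `|seg_pt t| <= 1.
Proof.
move=> /andP[t0 t1]; apply: le_trans (ler_normD _ _) _.
by rewrite !normrZ hx hy !mulr1 !ger0_norm ?subr_ge0 // subrK.
Qed.

Lemma seg_ptB s t : seg_pt t - seg_pt s = (t - s) *: (y - x).
Proof.
rewrite /seg_pt opprD addrACA -!scalerBl scalerBr.
have -> : 1 - t - (1 - s) = - (t - s) by ring.
by rewrite scaleNr addrC.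
Qed.

Lemma seg_dist0 : seg_dist 0 = 0.
Proof. by rewrite /seg_dist /seg_pt subr0 scale1r scale0r addr0 line_dist_self. Qed.

Lemma seg_dist1 : seg_dist 1 = 1.
Proof. by rewrite /seg_dist /seg_pt subrr scale0r add0r scale1r -hx -BJ_orthE. Qed.

Lemma seg_dist_lipschitz s t : seg_dist s <= seg_dist t + 12 * `|s - t|.
Proof.
have w_gt0 : 0 < `|seg_pt t| by rewrite normr_gt0 seg_pt_neq0.
rewrite /seg_dist; apply: le_trans (line_dist_lipschitz x (seg_pt s) w_gt0) _.
rewrite lerD2l seg_ptB normrZ distrC hx mulr1.
have yx_le2 : `|y - x| <= 2 by rewrite (le_trans (ler_normB _ _)) // hx hy.
have := seg_pt_norm_ge t; set n := `|seg_pt t| => n_ge.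
have q_le6 : 2 / n <= 6 by rewrite ler_pdivrMr; lra.
have q_ge0 : 0 <= 2 / n by rewrite divr_ge0 ?normr_ge0.
have : 2 / n * `|y - x| <= 12 by have := normr_ge0 (y - x); nra.
have := normr_ge0 (s - t); nra.
Qed.

Lemma seg_dist_continuous : continuous seg_dist.
Proof.
move=> t; apply/cvgrPdist_lt => e e0; apply/nbhs_ballP.
exists (e / 13) => /=; first by rewrite divr_gt0.
move=> s; rewrite /ball /= ltr_pdivlMr // => ts.
have := seg_dist_lipschitz s t; have := seg_dist_lipschitz t s.
rewrite (distrC s) ltr_norml; have := normr_ge0 (t - s); lra.
Qed.

Lemma line_seg_ptE t l : x + l *: seg_pt t = (1 + l * (1 - t)) *: x + (l * t) *: y.
Proof. by rewrite /seg_pt scalerDr !scalerA addrA scalerDl scale1r. Qed.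

Lemma line_seg_pt_lt1 t l : 0 <= t <= 1 -> `|x + l *: seg_pt t| < 1 -> l < 0.
Proof.
move=> /andP[t0 t1] lt1; rewrite ltNge; apply/negP => l0.
have := coefx_le_norm (1 + l * (1 - t)) (l * t); rewrite -line_seg_ptE.
have := ler_norm (1 + l * (1 - t)); nra.
Qed.

Lemma one_le_line_seg_pt t l : 0 <= t <= 1 -> 1 <= `|x + l *: seg_pt t| + `|l|.
Proof.
move=> t01; rewrite -{1}hx -{1}[x](addrK (l *: seg_pt t)).
apply: le_trans (ler_normB _ _) _.
by rewrite lerD2l normrZ ler_piMr ?seg_pt_norm_le.
Qed.

(* For [l < 0], [s / (s - l (t - s))] times [x + l w_t] lies on the line
   [x + R w_s]. *)
Lemma seg_dist_rescale s t l : 0 <= s -> s < t -> l < 0 ->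
  seg_dist s * (s - l * (t - s)) <= s * `|x + l *: seg_pt t|.
Proof.
move=> s0 st l0; set D := s - l * (t - s); have D0 : 0 < D by rewrite /D; nra.
have := line_dist_le x (seg_pt s) (l * t / D).
have -> : x + (l * t / D) *: seg_pt s = (s / D) *: (x + l *: seg_pt t).
  rewrite !line_seg_ptE scalerDr !scalerA.
  by congr (_ *: x + _ *: y); rewrite /D in D0 *; field; lra.
rewrite normrZ ger0_norm; last by rewrite divr_ge0 // ltW.
by rewrite mulrAC -ler_pdivlMr.
Qed.

(* If [c = g t <= g s], rescaling shows that the line [x + R w_t] stays at norm
   at least [c t / (s + c (t - s))] from the origin, which forces [c >= 1]. *)
Lemma seg_dist_lt s t : 0 <= s -> s < t -> t <= 1 ->
  0 < seg_dist t -> seg_dist t < 1 -> seg_dist s < seg_dist t.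
Proof.
move=> s0 st t1 gt0 gt1; rewrite ltNge; apply/negP => le_gs.
have t01 : 0 <= t <= 1 by apply/andP; split; lra.
set c := seg_dist t in gt0 gt1 le_gs; set K := s + c * (t - s).
have K0 : 0 < K by rewrite /K; nra.
have ct_le_K : c * t <= K by rewrite /K; nra.
have : c * t / K <= c.
  apply: line_dist_glb => l; rewrite ler_pdivrMr //.
  have [P_ge1|P_lt1] := leP 1 `|x + l *: seg_pt t|; first by nra.
  have l0 := line_seg_pt_lt1 t01 P_lt1.
  have := seg_dist_rescale s0 st l0; have := one_le_line_seg_pt l t01.
  rewrite ltr0_norm // /K; set P := `|x + l *: seg_pt t| => le_l le_P.
  have D0 : 0 < s - l * (t - s) by nra.
  have : c * (s - l * (t - s)) <= seg_dist s * (s - l * (t - s)) by nra.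
  have cts : 0 < c * (t - s) by nra.
  have : c * (t - s) * (1 - P) <= c * (t - s) * (- l) by nra.
  nra.
rewrite ler_pdivrMr // /K => le_c.
have : 0 < (1 - c) * (t - s) by nra.
nra.
Qed.

Lemma seg_dist_inj s t : 0 <= s <= 1 -> 0 <= t <= 1 -> 0 < seg_dist t < 1 ->
  seg_dist s = seg_dist t -> s = t.
Proof.
move=> /andP[s0 s1] /andP[t0 t1] /andP[gt0 gt1] gst.
apply/eqP; rewrite eq_le !leNgt; apply/andP; split; apply/negP => lt_st.
  by have := seg_dist_lt t0 lt_st s1; rewrite gst ltxx gt0 gt1 => /(_ isT isT).
by have := seg_dist_lt s0 lt_st t1 gt0 gt1; rewrite gst ltxx.
Qed.

Definition seg_level d := inf [set t | 0 <= t <= 1 /\ d <= seg_dist t].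

Lemma seg_levelP d : 0 < d < 1 ->
  [/\ 0 <= seg_level d <= 1, seg_dist (seg_level d) = d &
      forall t, 0 <= t <= 1 -> seg_dist t = d -> t = seg_level d].
Proof.
move=> /andP[d0 d1].
have [t] : exists2 t, t \in `[0, 1] & seg_dist t = d.
  apply: IVT; first exact: ler01.
    exact/continuous_subspaceT/seg_dist_continuous.
  by rewrite seg_dist0 seg_dist1 /Num.min /Num.max ltr01 !ltW.
rewrite in_itv /= => t01 gtd.
suff <- : t = seg_level d.
  by split=> // s s01 gsd; apply: seg_dist_inj; rewrite ?gtd ?d0.
apply/eqP; rewrite eq_le; apply/andP; split.
  apply: lb_le_inf; first by exists t; split; rewrite // gtd.
  move=> s [/andP[s0 s1] ds]; rewrite leNgt; apply/negP => st.
  by have := seg_dist_lt s0 st (andP t01).2; rewrite gtd d0 d1 => /(_ isT isT); lra.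
by apply: ge_inf; [exists 0 => s [/andP[]] | split; rewrite ?gtd].
Qed.

Lemma coef_eq0 a b : a *: x + b *: y = 0 -> a = 0 /\ b = 0.
Proof.
move=> ab0; have := coef_le_norm a b; rewrite ab0 normr0 mulr0.
by have := normr_ge0 a; have := normr_ge0 b; split; apply/normr0_eq0; lra.
Qed.

Definition seg_dir d := `|seg_pt (seg_level d)|^-1 *: seg_pt (seg_level d).

Lemma seg_dirP d : 0 < d < 1 -> `|seg_dir d| = 1 /\ line_dist x (seg_dir d) = d.
Proof.
move=> d01; have [_ gd _] := seg_levelP d01.
by rewrite norm_normalize ?seg_pt_neq0 // line_distZ ?invr_eq0 ?normr_eq0 ?seg_pt_neq0.
Qed.

Lemma seg_dir_unique d z a b : 0 < d < 1 -> `|z| = 1 -> line_dist x z = d ->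
  z = a *: x + b *: y -> 0 <= a -> 0 < b -> z = seg_dir d.
Proof.
move=> d01 z1 zd zE a0 b0; have [_ _ level_uniq] := seg_levelP d01.
have ab0 : 0 < a + b by lra.
have zE' : z = (a + b) *: seg_pt (b / (a + b)).
  by rewrite zE /seg_pt scalerDr !scalerA; congr (_ *: x + _ *: y); field; lra.
have t01 : 0 <= b / (a + b) <= 1.
  by apply/andP; split; [apply: divr_ge0; lra | rewrite ler_pdivrMr //; lra].
rewrite /seg_dir -(level_uniq _ t01).
  by rewrite zE' in z1 *; apply: unit_posZE.
by rewrite -zd zE' line_distZ ?gt_eqF.
Qed.

End Segment.

Section UnitLevelSet.
Variables (R : realType) (V : normedModType R).

Lemma dim_two_span (x y : V) : dim_two V ->
  (forall a b : R, a *: x + b *: y = 0 -> a = 0 /\ b = 0) ->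
  forall v : V, exists a b : R, v = a *: x + b *: y.
Proof.
move=> [e1 [e2 e12]] xy_free v.
have [[p1 p2] [/= xE _]] := e12 x; have [[q1 q2] [/= yE _]] := e12 y.
have [[r1 r2] [/= vE _]] := e12 v.
have combE k m : k *: x + m *: y = (k * p1 + m * q1) *: e1 + (k * p2 + m * q2) *: e2.
  by rewrite xE yE !scalerDr !scalerA addrACA -!scalerDl.
have [det0|det0] := eqVneq (p1 * q2 - p2 * q1) 0; last first.
  exists ((r1 * q2 - r2 * q1) / (p1 * q2 - p2 * q1)).
  exists ((p1 * r2 - p2 * r1) / (p1 * q2 - p2 * q1)).
  by rewrite vE combE; congr (_ *: e1 + _ *: e2); field.
have comb0 k m : k * p1 + m * q1 = 0 -> k * p2 + m * q2 = 0 -> k *: x + m *: y = 0.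
  by move=> h1 h2; rewrite combE h1 h2 !scale0r addr0.
have [_ p20] : q2 = 0 /\ - p2 = 0 by apply/xy_free/comb0; nra.
have [_ p10] : q1 = 0 /\ - p1 = 0 by apply/xy_free/comb0; nra.
have [] := xy_free 1 0; last by move=> /eqP; rewrite oner_eq0.
by apply: comb0; nra.
Qed.

Lemma seg_level_D_orth eps (x y : V) : `|x| = 1 ->
  inf [set t : R | 0 <= t <= 1 /\ D_orth eps x (seg_pt x y t)] =
  seg_level x y (Num.sqrt (1 - eps ^+ 2)).
Proof.
move=> hx; congr inf; apply/seteqP; split=> t [t01 ht]; split=> //.
  by move/D_orthE: ht; rewrite hx mulr1.
by apply/D_orthE; rewrite hx mulr1.
Qed.

Variables (x y : V).
Hypotheses (hx : `|x| = 1) (hy : `|y| = 1) (hxy : BJ_orth x y).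

Let hxN : `|- x| = 1. Proof. by rewrite normrN. Qed.

Let hxyN : BJ_orth (- x) y.
Proof. by apply/BJ_orthE; rewrite line_distNl normrN; apply/BJ_orthE. Qed.

Lemma seg_dir_upper d z a b : 0 < d < 1 -> `|z| = 1 -> line_dist x z = d ->
  z = a *: x + b *: y -> 0 < b -> z = seg_dir x y d \/ z = seg_dir (- x) y d.
Proof.
move=> d01 z1 zd zE b0; have [a0|a0] := leP 0 a.
  by left; apply: (seg_dir_unique hx hy hxy d01 z1 zd zE).
right; apply: (seg_dir_unique hxN hy hxyN d01 z1 _ (a := - a) _ (ltW _) b0).
- by rewrite line_distNl.
- by rewrite scaleNr scalerN opprK.
- by rewrite oppr_gt0.
Qed.

Lemma unit_level_setE d : dim_two V -> 0 < d < 1 ->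
  [set z : V | `|z| = 1 /\ line_dist x z = d] =
  [set z | z = seg_dir x y d \/ z = - seg_dir x y d \/
           z = seg_dir (- x) y d \/ z = - seg_dir (- x) y d].
Proof.
move=> hdim d01; apply/seteqP; split=> [z [z1 zd]|z].
  have [a [b zE]] := dim_two_span hdim (coef_eq0 hx hy hxy) z.
  case: (ltgtP b 0) => [b_lt0|b_gt0|b0].
  - have zN1 : `|- z| = 1 by rewrite normrN.
    have zNd : line_dist x (- z) = d by rewrite line_distNr.
    have zNE : - z = (- a) *: x + (- b) *: y by rewrite zE opprD !scaleNr.
    rewrite -oppr_gt0 in b_lt0.
    by case: (seg_dir_upper d01 zN1 zNd zNE b_lt0) => /(canRL opprK) ->;
      [right; left | do 3 right].
  - by case: (seg_dir_upper d01 z1 zd zE b_gt0) => ->;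
      [left | right; right; left].
  - move: zE; rewrite b0 scale0r addr0 => zE.
    have a0 : a != 0.
      by apply: contra_eq_neq z1 => a0; rewrite zE a0 scale0r normr0 eq_sym oner_neq0.
    move: zd (andP d01).1; rewrite zE line_distZ // line_dist_self => <-.
    by rewrite ltxx.
have [n1 d1] := seg_dirP hx hy hxy d01.
have [nN1] := seg_dirP hxN hy hxyN d01; rewrite line_distNl => dN1.
by case=> [|[|[|]]] ->; split; rewrite ?normrN ?line_distNr.
Qed.

End UnitLevelSet.

Theorem theorem2p2 (R : realType) (V : normedModType R) (hdim : dim_two V)
  (x y : V) (eps : R) (hx : `|x| = 1) (hy : `|y| = 1)
  (heps0 : 0 <= eps) (heps1 : eps < 1) (hxy : BJ_orth x y) :
  let t1 := inf [set t : R | 0 <= t <= 1 /\ D_orth eps x ((1 - t) *: x + t *: y)] in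
  let t2 := inf [set t : R | 0 <= t <= 1 /\ D_orth eps x (- ((1 - t) *: x) + t *: y)] in
  let u1 := (1 - t1) *: x + t1 *: y in
  let u2 := - ((1 - t2) *: x) + t2 *: y in
  let v1 := `|u1|^-1 *: u1 in
  let v2 := `|u2|^-1 *: u2 in
  (0 < eps -> S_set x eps = [set z | z = v1 \/ z = - v1 \/ z = v2 \/ z = - v2]) /\
  (eps = 0 -> S_set x eps = [set y' | `|y'| = 1 /\ BJ_orth x y']).
Proof.
move=> t1 t2 u1 u2 v1 v2.
split=> [eps_gt0|eps0]; last first.
  rewrite /S_set eps0 expr0n /= subr0 sqrtr1.
  apply/seteqP; split=> z [z1 hz]; split=> //.
    by apply/BJ_orthE; rewrite hx.
  by move/BJ_orthE: hz; rewrite hx.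
set d := Num.sqrt (1 - eps ^+ 2).
have d01 : 0 < d < 1.
  apply/andP; split; first by rewrite sqrtr_gt0; nra.
  by rewrite -[X in _ < X]sqrtr1 ltr_sqrt ?ltr01 //; nra.
have t2E : t2 = seg_level (- x) y d.
  rewrite -(seg_level_D_orth eps y (_ : `|- x| = 1)) ?normrN //.
  by congr inf; apply/seteqP; split=> t [t01 ht]; split=> //; move: ht;
    rewrite D_orthNl /seg_pt scalerN.
have v1E : v1 = seg_dir x y d by rewrite /v1 /u1 /t1 (seg_level_D_orth eps y hx).
have v2E : v2 = seg_dir (- x) y d by rewrite /v2 /u2 t2E /seg_dir /seg_pt scalerN.
by rewrite v1E v2E; apply: unit_level_setE.
Qed.
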